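(* Let $(X,\mathcal{T})$ be a connected door space and let $A,B$ be disjoint nonempty subsets of $X$ with $A$ open and $B$ closed. Then for every $C\subseteq X\setminus(A\cup B)$, the set $A\cup C$ is open and the set $B\cup C$ is closed.
   Context: A topological space $(X,\mathcal{T})$ is a connected door space if every proper nonempty subset of $X$ (i.e. every $A$ with $\varnothing\ne A\subsetneq X$) is either open or closed, but not both. *)

From Stdlib Require Import Classical.

Definition set (X : Type) := X -> Prop.

Record topology (X : Type) := Topology {
  is_open : set X -> Prop;
  open_empty : is_open (fun _ => False);
  open_full : is_open (fun _ => True);
  open_union : forall F : set X -> Prop,
      (forall U, F U -> is_open U) ->
      is_open (fun x => exists U, F U /\ U x);
  open_inter : forall U V, is_open U -> is_open V ->
      is_open (fun x => U x /\ V x)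
}.
Arguments is_open {X} t U.

Definition is_closed {X : Type} (T : topology X) (A : set X) : Prop :=
  is_open T (fun x => ~ A x).

Definition connected_door_space {X : Type} (T : topology X) : Prop :=
  forall A : set X,
    (exists x, A x) -> (exists x, ~ A x) ->
    (is_open T A \/ is_closed T A) /\ ~ (is_open T A /\ is_closed T A).

(* A connected door space has no proper nonempty clopen set.  If [A ∪ C] were
   closed, then [C] is nonempty and the proper set [A ∪ B] is open or closed:
   if open, [B = (A ∪ B) \ (A ∪ C)] is clopen; if closed, the complement
   [X \ A = (X \ (A ∪ B)) ∪ (X \ (A ∪ C))] is open, so [A] is clopen.  The
   closedness of [B ∪ C] reduces to this, since its complement is [A ∪ C']
   for the set [C'] of points outside [A ∪ B ∪ C]. *)
From Stdlib Require Import Classical FunctionalExtensionality PropExtensionality.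

Lemma open_ext {X : Type} (T : topology X) (U V : set X) :
  (forall x, U x <-> V x) -> is_open T U -> is_open T V.
Proof.
  intros UV HU; replace V with U; [exact HU |].
  apply functional_extensionality; intro x.
  apply propositional_extensionality; apply UV.
Qed.

Lemma open_union2 {X : Type} (T : topology X) (U V : set X) :
  is_open T U -> is_open T V -> is_open T (fun x => U x \/ V x).
Proof.
  intros HU HV.
  apply (open_ext T (fun x => exists W, (W = U \/ W = V) /\ W x)).
  - intro x; split.
    + intros [W [[-> | ->] Wx]]; auto.
    + intros [Ux | Vx]; eauto.
  - apply open_union; intros W [-> | ->]; assumption.
Qed.

Section ConnectedDoorSpace.

Variables (X : Type) (T : topology X).
Hypothesis door : connected_door_space T.

Lemma door_open_or_closed (U : set X) :
  (exists x, U x) -> (exists x, ~ U x) -> is_open T U \/ is_closed T U.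
Proof. intros inU outU; apply (door U inU outU). Qed.

Lemma door_not_clopen (U : set X) :
  (exists x, U x) -> (exists x, ~ U x) -> is_open T U -> is_closed T U -> False.
Proof. intros inU outU HU CU; apply (door U inU outU); split; assumption. Qed.

Variables A B : set X.
Hypotheses (AB_disjoint : forall x, A x -> B x -> False)
  (A_nonempty : exists x, A x) (B_nonempty : exists x, B x)
  (A_open : is_open T A) (B_closed : is_closed T B).

Lemma open_union_gap (C : set X) :
  (forall x, C x -> ~ A x /\ ~ B x) -> is_open T (fun x => A x \/ C x).
Proof.
  intros C_gap.
  destruct A_nonempty as [a Aa], B_nonempty as [b Bb].
  assert (notB_of_AC : forall x, A x \/ C x -> ~ B x).
  { intros x [Ax | Cx] Bx; [exact (AB_disjoint x Ax Bx) | exact (proj2 (C_gap x Cx) Bx)]. }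
  destruct (door_open_or_closed (fun x => A x \/ C x)) as [| AC_closed];
    [eauto | exists b; intros ACb; exact (notB_of_AC b ACb Bb) | assumption |].
  destruct (classic (exists c, C c)) as [[c Cc] | no_C].
  2: { apply (open_ext T A); [| exact A_open].
       intro x; split; [tauto | intros [Ax | Cx]; [exact Ax | case no_C; eauto]]. }
  exfalso.
  destruct (door_open_or_closed (fun x => A x \/ B x)) as [AB_open | AB_closed].
  - eauto.
  - exists c; destruct (C_gap c Cc); tauto.
  - assert (B_open : is_open T B).
    { refine (open_ext T _ _ _ (open_inter X T _ _ AB_open AC_closed)).
      intro x; split.
      - intros [[Ax | Bx] notAC]; [case notAC; left; exact Ax | exact Bx].
      - intros Bx; split; [right; exact Bx | intros ACx; exact (notB_of_AC x ACx Bx)]. }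
    apply (door_not_clopen B); [eauto | | exact B_open | exact B_closed].
    exists a; intros Ba; exact (AB_disjoint a Aa Ba).
  - assert (A_closed : is_closed T A).
    { refine (open_ext T _ _ _ (open_union2 T _ _ AB_closed AC_closed)).
      intro x; split.
      + intros [notAB | notAC] Ax; [apply notAB | apply notAC]; left; exact Ax.
      + intros notA.
        destruct (classic (B x)) as [Bx |]; [right | left; tauto].
        intros [Ax | Cx]; [exact (notA Ax) | exact (proj2 (C_gap x Cx) Bx)]. }
    apply (door_not_clopen A); [eauto | | exact A_open | exact A_closed].
    exists b; intros Ab; exact (AB_disjoint b Ab Bb).
Qed.

Lemma closed_union_gap (C : set X) :
  (forall x, C x -> ~ A x /\ ~ B x) -> is_closed T (fun x => B x \/ C x).
Proof.
  intros C_gap.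
  pose (outside := fun x => ~ (A x \/ B x \/ C x)).
  apply (open_ext T (fun x => A x \/ outside x)).
  - intro x; unfold outside; split.
    + intros [Ax | out] [Bx | Cx];
        [exact (AB_disjoint x Ax Bx) | exact (proj1 (C_gap x Cx) Ax) | tauto | tauto].
    + intros notBC; destruct (classic (A x)); [left | right]; tauto.
  - apply open_union_gap; unfold outside; tauto.
Qed.

End ConnectedDoorSpace.

Theorem lemma1 (X : Type) (T : topology X) (A B C : set X) :
  connected_door_space T ->
  (forall x, A x -> B x -> False) ->
  (exists x, A x) ->
  (exists x, B x) ->
  is_open T A ->
  is_closed T B ->
  (forall x, C x -> ~ A x /\ ~ B x) ->
  is_open T (fun x => A x \/ C x) /\ is_closed T (fun x => B x \/ C x).
Proof.
  intros door AB_disjoint A_nonempty B_nonempty A_open B_closed C_gap.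
  split.
  - exact (open_union_gap X T door A B AB_disjoint A_nonempty B_nonempty
             A_open B_closed C C_gap).
  - exact (closed_union_gap X T door A B AB_disjoint A_nonempty B_nonempty
             A_open B_closed C C_gap).
Qed.
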